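(* Let $B\in M_{Q_0}(\mathbb Z)$ be skew-symmetrizable and $G$ a group of permutations of $Q_0$. Let $(A,\mathbf x)$ be a $G$-invariant seed in $\mathcal A(B)$, with $A=(a_{ij})$ and $\mathbf x=(x_i)_{i\in Q_0}$. Let $\Omega=\{i_1,\ldots,i_n\}$ be a $G$-orbit and $(A^{(n)},\mathbf x^{(n)})=\mu_{i_n}\circ\cdots\circ\mu_{i_1}(A,\mathbf x)$. Then for every $i\in Q_0$, $$x^{(n)}_i=\begin{cases}x_i&\text{if } i\notin\Omega,\\[2pt] \dfrac{\prod_{a_{j,i_k}>0}x_j^{a_{j,i_k}}+\prod_{a_{j,i_k}<0}x_j^{-a_{j,i_k}}}{x_{i_k}}&\text{if } i=i_k \text{ for some } k.\end{cases}$$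
   Context: Skew-symmetrizable: $DB$ skew-symmetric for a positive integer diagonal $D$. Mutation of matrices: $\mu_k(M)=(m'_{ij})$ with $m'_{ij}=-m_{ij}$ if $k\in\{i,j\}$, else $m_{ij}+\tfrac12(|m_{ik}|m_{kj}+m_{ik}|m_{kj}|)$; of seeds: $\mu_k(M,\mathbf y)=(\mu_k(M),\mathbf y')$ with $y'_i=y_i$ ($i\neq k$), $y_ky'_k=\prod_{m_{ik}>0}y_i^{m_{ik}}+\prod_{m_{ik}<0}y_i^{-m_{ik}}$. $\mathcal A(B)=\mathcal A(B,\mathbf u)$ is the cluster algebra with initial seed $(B,\mathbf u)$, $\mathbf u=(u_i)_{i\in Q_0}$ indeterminates; its seeds are those obtained from $(B,\mathbf u)$ by finite sequences of mutations. $G$ acts on $\mathbb Z[\mathbf u^{\pm1}]$ by $gu_i=u_{gi}$. A permutation group $G$ is an admissible automorphism group of a matrix $S=(s_{ij})$ (and $(S,G)$ an admissible pair) if $s_{gi,gj}=s_{ij}$ for all $g,i,j$ and for distinct $i,j$ in the same $G$-orbit there is no path of length $1$ or $2$ from $i$ to $j$ in the quiver of $S$ ($s_{ij}\le0$ and no $k$ with $s_{ik}>0$, $s_{kj}>0$). A seed $(S,\mathbf x)$ of $\mathcal A(B)$ is $G$-invariant if $gx_i=x_{gi}$ for all $g\in G$, $i\in Q_0$, and $(S,G)$ is an admissible pair. *)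

From HB Require Import structures.
From mathcomp Require Import all_boot all_order all_algebra all_fingroup.
From mathcomp Require Import generic_quotient fraction.
From mathcomp Require Import mpoly.
Set Implicit Arguments. Unset Strict Implicit. Unset Printing Implicit Defensive.
Import Order.TTheory GRing.Theory Num.Theory.
Local Open Scope ring_scope.

(* Q_0 = 'I_n.  Exchange matrices are n x n integer matrices. *)

Definition ambient (n : nat) := {fraction {mpoly int[n]}}.

Definition uvar (n : nat) (i : 'I_n) : ambient n := tofrac (('X_i : {mpoly int[n]})).

Definition skew_symmetrizable (n : nat) (B : 'M[int]_n) : Prop :=
  exists d : 'I_n -> nat, (forall i, (0 < d i)%N) /\
    forall i j, (d i)%:Z * B i j = - ((d j)%:Z * B j i).

Definition mut_mx (n : nat) (k : 'I_n) (M : 'M[int]_n) : 'M[int]_n :=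
  \matrix_(i, j)
    if (i == k) || (j == k) then - M i j
    else M i j + ((`|M i k|%:Z * M k j + M i k * `|M k j|%:Z) %/ 2)%Z.

Definition mut_cl (n : nat) (k : 'I_n) (M : 'M[int]_n) (y : 'I_n -> ambient n)
  : 'I_n -> ambient n :=
  fun i => if i == k then
     (\prod_(j < n | M j k > 0) y j ^+ `|M j k| +
      \prod_(j < n | M j k < 0) y j ^+ `|M j k|) / y k
   else y i.

Definition seed (n : nat) := ('M[int]_n * ('I_n -> ambient n))%type.

Definition mut_seed (n : nat) (k : 'I_n) (s : seed n) : seed n :=
  (mut_mx k s.1, mut_cl k s.1 s.2).

(* mu_{k_m} o ... o mu_{k_1} (s) for the list ks = [k_1; ...; k_m] *)
Definition mut_seq (n : nat) (ks : seq 'I_n) (s : seed n) : seed n :=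
  foldl (fun t k => mut_seed k t) s ks.

Definition is_seed_of (n : nat) (B : 'M[int]_n) (s : seed n) : Prop :=
  exists ks : seq 'I_n, s = mut_seq ks (B, @uvar n).

Definition act_poly (n : nat) (g : {perm 'I_n}) (p : {mpoly int[n]}) : {mpoly int[n]} :=
  p \mPo [tuple 'X_(g i) | i < n].

(* extended to the fraction field Q(u) (independent of the representative) *)
Definition act (n : nat) (g : {perm 'I_n}) (x : ambient n) : ambient n :=
  let r := repr x in tofrac (act_poly g (frac r).1) / tofrac (act_poly g (frac r).2).

Definition same_orbit (n : nat) (G : {group {perm 'I_n}}) (i j : 'I_n) : Prop :=
  exists2 g, g \in G & g i = j.

Definition admissible (n : nat) (S : 'M[int]_n) (G : {group {perm 'I_n}}) : Prop :=
  (forall g, g \in G -> forall i j, S (g i) (g j) = S i j) /\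
  (forall i j, i != j -> same_orbit G i j ->
     S i j <= 0 /\ ~ (exists k, S i k > 0 /\ S k j > 0)).

Definition G_invariant_seed (n : nat) (B : 'M[int]_n) (G : {group {perm 'I_n}})
  (s : seed n) : Prop :=
  is_seed_of B s /\
  (forall g, g \in G -> forall i, act g (s.2 i) = s.2 (g i)) /\
  admissible s.1 G.

From HB Require Import structures.
From mathcomp Require Import all_boot all_order all_algebra all_fingroup.
From mathcomp Require Import generic_quotient fraction.
From mathcomp Require Import mpoly.
From mathcomp Require Import zify.
Import Order.TTheory GRing.Theory Num.Theory.
Set Implicit Arguments. Unset Strict Implicit.
Local Open Scope ring_scope.

(** Mutation preserves the skew-symmetrizer of [B], so [A] is
  skew-symmetrizable; admissibility makes [a_ij <= 0] in both directions for
  [i, j] in one orbit, which forces [a_ij = 0].  Mutating at a vertex [k] of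
  such an independent set leaves the columns of the other vertices of the set
  unchanged and changes only [x_k], on which those columns do not depend, so
  the mutations at the orbit do not interact. *)

Lemma halfz_abs_mul (a b : int) :
  ((`|a|%:Z * b + a * `|b|%:Z) %/ 2)%Z =
  if (0 < a) && (0 < b) then a * b
  else if (a < 0) && (b < 0) then - (a * b) else 0.
Proof. by case: (ltrgt0P a) => ?; case: (ltrgt0P b) => ? /=; lia. Qed.

Section SkewSymmetrizer.

Variables (n : nat) (d : 'I_n -> nat).
Hypothesis d_gt0 : forall i, (0 < d i)%N.

Definition is_skew_symmetrizer (M : 'M[int]_n) :=
  forall i j, (d i)%:Z * M i j = - ((d j)%:Z * M j i).

Lemma mut_mx_skew_symmetrizer k M :
  is_skew_symmetrizer M -> is_skew_symmetrizer (mut_mx k M).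
Proof.
move=> dM i j; rewrite !mxE !halfz_abs_mul orbC.
case: ((j == k) || (i == k)); first by rewrite !mulrN dM opprK.
have := dM i k; have := dM k j; have := dM i j; have := dM j k; have := dM k i.
have := d_gt0 i; have := d_gt0 j; have := d_gt0 k.
by case: (ltrgt0P (M i k)) => ?; case: (ltrgt0P (M k j)) => ?;
   case: (ltrgt0P (M j k)) => ?; case: (ltrgt0P (M k i)) => ? /=; nia.
Qed.

Lemma mut_seq_skew_symmetrizer ks (s : seed n) :
  is_skew_symmetrizer s.1 -> is_skew_symmetrizer (mut_seq ks s).1.
Proof.
by elim: ks s => [|k ks IH] s //= dM; apply: IH; apply: mut_mx_skew_symmetrizer.
Qed.

End SkewSymmetrizer.

Lemma seed_skew_symmetrizable n (B : 'M[int]_n) (s : seed n) :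
  skew_symmetrizable B -> is_seed_of B s -> skew_symmetrizable s.1.
Proof.
move=> [d [d_gt0 dB]] [ks ->]; exists d; split=> //.
exact: mut_seq_skew_symmetrizer.
Qed.

Lemma skew_symmetrizable_diag0 n (S : 'M[int]_n) i :
  skew_symmetrizable S -> S i i = 0.
Proof. by move=> [d [d_gt0 dS]]; have := dS i i; have := d_gt0 i; lia. Qed.

Lemma skew_symmetrizable_nonpos_eq0 n (S : 'M[int]_n) i j :
  skew_symmetrizable S -> S i j <= 0 -> S j i <= 0 -> S i j = 0.
Proof.
by move=> [d [d_gt0 dS]]; have := dS i j; have := d_gt0 i; have := d_gt0 j; lia.
Qed.

Lemma same_orbit_sym n (G : {group {perm 'I_n}}) i j :
  same_orbit G i j -> same_orbit G j i.
Proof. by move=> [g gG <-]; exists g^-1%g; rewrite ?groupV ?permK. Qed.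

Lemma same_orbit_trans n (G : {group {perm 'I_n}}) i j k :
  same_orbit G i j -> same_orbit G j k -> same_orbit G i k.
Proof.
by move=> [g gG <-] [h hG <-]; exists (g * h)%g; rewrite ?groupM ?permM.
Qed.

Lemma admissible_orbit_eq0 n (S : 'M[int]_n) (G : {group {perm 'I_n}}) i j :
  skew_symmetrizable S -> admissible S G -> same_orbit G i j -> S i j = 0.
Proof.
move=> skS [_ noArrow] ij; have [<-|neq_ij] := eqVneq i j.
  exact: skew_symmetrizable_diag0.
apply: skew_symmetrizable_nonpos_eq0 => //; first by case: (noArrow i j).
by case: (noArrow j i) => //; [rewrite eq_sym | apply: same_orbit_sym].
Qed.

Lemma mut_mx_col n (k b : 'I_n) (M : 'M[int]_n) j :
  b != k -> M k b = 0 -> mut_mx k M j b = M j b.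
Proof.
move=> /negbTE neq_bk Mkb0; rewrite mxE neq_bk orbF.
by case: eqP => [->|_]; rewrite Mkb0 ?oppr0 //; lia.
Qed.

Lemma mut_cl_neq n (k i : 'I_n) (M : 'M[int]_n) y :
  i != k -> mut_cl k M y i = y i.
Proof. by rewrite /mut_cl => /negbTE ->. Qed.

Lemma eq_mut_cl n (i : 'I_n) (M M' : 'M[int]_n) (y y' : 'I_n -> ambient n) :
  (forall j, M' j i = M j i) -> (forall j, M j i != 0 -> y' j = y j) ->
  y' i = y i -> mut_cl i M' y' i = mut_cl i M y i.
Proof.
move=> eqM eqy eqyi; rewrite /mut_cl eqxx eqyi.
congr ((_ + _) / _); apply: eq_big => j; rewrite ?eqM // => Mji.
  by rewrite eqy // gt_eqF.
by rewrite eqy // lt_eqF.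
Qed.

Lemma mut_seq_independent n (ks : seq 'I_n) (M : 'M[int]_n) y :
  uniq ks -> {in ks &, forall a b, M a b = 0} ->
  forall i, (mut_seq ks (M, y)).2 i = if i \in ks then mut_cl i M y i else y i.
Proof.
elim: ks M y => [|k ks IH] M y //= /andP [k_ks uniq_ks] indep i.
have neq_k b : b \in ks -> b != k by move=> b_ks; apply: contraNneq k_ks => <-.
have Mkb0 b : b \in ks -> M k b = 0 by move=> b_ks; rewrite indep ?inE ?eqxx ?b_ks ?orbT.
have colE b j : b \in ks -> mut_mx k M j b = M j b.
  by move=> b_ks; rewrite mut_mx_col ?neq_k ?Mkb0.
rewrite IH // => [|a b a_ks b_ks]; last first.
  by rewrite colE // indep // inE ?a_ks ?b_ks orbT.
rewrite inE; have [->|neq_ik] := eqVneq i k; first by rewrite (negPf k_ks).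
case: ifP => /= [i_ks|_]; last exact: mut_cl_neq.
apply: eq_mut_cl => [j|j Mji|]; first exact: colE.
  by apply: mut_cl_neq; apply: contraNneq Mji => ->; rewrite Mkb0.
exact: mut_cl_neq.
Qed.

Theorem mainTheorem10 (n : nat) (B : 'M[int]_n) (G : {group {perm 'I_n}})
  (A : 'M[int]_n) (x : 'I_n -> ambient n) (i0 : 'I_n) (om : seq 'I_n) :
  skew_symmetrizable B ->
  G_invariant_seed B G (A, x) ->
  uniq om -> (forall i, i \in om <-> same_orbit G i0 i) ->
  forall i : 'I_n,
    (mut_seq om (A, x)).2 i =
    if i \in om then
      (\prod_(j < n | A j i > 0) x j ^+ `|A j i| +
       \prod_(j < n | A j i < 0) x j ^+ `|A j i|) / x i
    else x i.
Proof.
move=> skB [seedA [_ admA]] uniq_om omE i.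
have skA : skew_symmetrizable A := seed_skew_symmetrizable skB seedA.
have indep : {in om &, forall a b, A a b = 0}.
  move=> a b /omE a_orb /omE b_orb; apply: admissible_orbit_eq0 skA admA _.
  exact: same_orbit_trans (same_orbit_sym a_orb) b_orb.
by rewrite mut_seq_independent //; case: ifP => //; rewrite /mut_cl eqxx.
Qed.
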